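(* Let $1\le a\le n$ be integers. The degree of $v_a$ in the graph $\mathcal{L}_{[a,n]}$ (counting the self-loop at $v_a$ once, i.e. the number of integers $b$ with $a\le b\le n$ and $\operatorname{lcm}(a,b)\le n$) is $$d(v_a)=\sum_{1\le j\le \frac{n}{a}}\ \sum_{\substack{1\le \ell\le j\\ \gcd(j,\ell)=1\\ \ell\mid a}} 1.$$
   Context: For integers $k\le n$, $\mathcal{L}_{[k,n]}$ is the graph with vertices $v_k,v_{k+1},\ldots,v_n$ and an edge between $v_i$ and $v_j$ whenever $\operatorname{lcm}(i,j)\le n$; in particular each vertex has a self-loop. *)

From mathcomp Require Import all_boot.

(* The graph L_[k,n]: vertices v_k..v_n, edge v_i -- v_j iff lcm(i,j) <= n
   (self-loops included). *)
Definition L_adj (n i j : nat) : bool := lcmn i j <= n.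

Definition L_degree (k n i : nat) : nat :=
  #|[pred b : 'I_n.+1 | (k <= b) && L_adj n i b]|.

From mathcomp Require Import all_boot.

(* Write b/a = j/l in lowest terms. Then l divides a, b = (a/l) j,
   lcm(a, b) = a j, and a <= b iff l <= j; conversely every coprime pair (j, l)
   with l | a arises from b = (a/l) j. Hence b |-> (j, l) is a bijection from
   the neighbours b >= a of v_a onto the pairs l <= j <= n/a counted by the
   double sum, the condition lcm(a, b) <= n becoming j <= n/a. *)

Definition reduced_ratio (a b : nat) : nat * nat := (b %/ gcdn a b, a %/ gcdn a b).

Definition scale_ratio (a : nat) (jl : nat * nat) : nat := a %/ jl.2 * jl.1.

Lemma coprime_reduced_ratio a b : 0 < a -> coprime (b %/ gcdn a b) (a %/ gcdn a b).
Proof.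
move=> a_gt0; have g_gt0 : 0 < gcdn a b by rewrite gcdn_gt0 a_gt0.
rewrite /coprime gcdnC -(eqn_pmul2l g_gt0) muln_gcdr muln1.
by rewrite !muln_divA ?dvdn_gcdl ?dvdn_gcdr // !mulKn.
Qed.

Lemma scale_reduced_ratio a b : 0 < a -> scale_ratio a (reduced_ratio a b) = b.
Proof.
move=> a_gt0; have g_gt0 : 0 < gcdn a b by rewrite gcdn_gt0 a_gt0.
by rewrite /scale_ratio /= divnA ?dvdn_gcdl // mulKn // mulnC divnK // dvdn_gcdr.
Qed.

Section ScaleRatio.

Variables (a j l : nat).
Hypotheses (l_dvd_a : l %| a) (coprime_jl : coprime j l).

Lemma gcdn_scale_ratio : gcdn a (scale_ratio a (j, l)) = a %/ l.
Proof. by rewrite /scale_ratio -{1}(divnK l_dvd_a) -muln_gcdr gcdnC (eqP coprime_jl) muln1. Qed.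

Lemma lcmn_scale_ratio : lcmn a (scale_ratio a (j, l)) = a * j.
Proof.
rewrite /scale_ratio -{1}(divnK l_dvd_a) -muln_lcmr /lcmn gcdnC (eqP coprime_jl).
by rewrite divn1 mulnA divnK.
Qed.

Hypothesis a_gt0 : 0 < a.

Let l_gt0 : 0 < l := dvdn_gt0 a_gt0 l_dvd_a.

Let quotient_gt0 : 0 < a %/ l.
Proof. by rewrite divn_gt0 // dvdn_leq. Qed.

Lemma reduced_scale_ratio : reduced_ratio a (scale_ratio a (j, l)) = (j, l).
Proof. by rewrite /reduced_ratio gcdn_scale_ratio /scale_ratio /= mulKn // divnA // mulKn. Qed.

Lemma leq_scale_ratio : (a <= scale_ratio a (j, l)) = (l <= j).
Proof. by rewrite /scale_ratio -{1}(divnK l_dvd_a) leq_pmul2l. Qed.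

End ScaleRatio.

Definition L_neighbours (a n : nat) : seq nat := [seq b <- index_iota a n.+1 | L_adj n a b].

Definition reduced_pairs (a n : nat) : seq (nat * nat) :=
  [seq (j, l) | j <- index_iota 1 (n %/ a).+1,
                l <- [seq l <- index_iota 1 j.+1 | coprime j l && (l %| a)]].

Lemma L_degree_neighbours a n : L_degree a n a = size (L_neighbours a n).
Proof.
rewrite /L_degree -sum1_card size_filter -sum1_count big_geq_mkord.
by apply: eq_bigl => b; rewrite inE andbC.
Qed.

Lemma size_reduced_pairs a n :
  size (reduced_pairs a n) =
  \sum_(1 <= j < (n %/ a).+1) \sum_(1 <= l < j.+1 | coprime j l && (l %| a)) 1.
Proof.
rewrite size_allpairs_dep sumnE big_map; apply: eq_bigr => j _.
by rewrite sum1_count size_filter.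
Qed.

Lemma uniq_reduced_pairs a n : uniq (reduced_pairs a n).
Proof.
apply: allpairs_uniq_dep => [|j _|]; rewrite ?filter_uniq ?iota_uniq //.
by move=> [j l] [j' l'] _ _ [/= -> ->].
Qed.

Section Bijection.

Variables (a n : nat).
Hypothesis a_gt0 : 0 < a.

Lemma mem_reduced_pairs j l :
  ((j, l) \in reduced_pairs a n) = [&& l <= j <= n %/ a, coprime j l & l %| a].
Proof.
apply/allpairsPdep/idP => [[j' [l' [+ + [-> ->]]]] |].
  rewrite mem_filter !mem_index_iota !ltnS => /andP[_ j_le].
  by move=> /andP[/andP[coprime_jl l_dvd_a] /andP[_ l_le_j]]; rewrite l_le_j j_le coprime_jl l_dvd_a.
move=> /and3P[/andP[l_le_j j_le] coprime_jl l_dvd_a].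
exists j, l; rewrite mem_filter !mem_index_iota !ltnS coprime_jl l_dvd_a l_le_j j_le.
by rewrite (leq_trans _ l_le_j) ?(dvdn_gt0 a_gt0 l_dvd_a).
Qed.

Lemma scale_ratio_in_neighbours j l : l %| a -> coprime j l ->
  (scale_ratio a (j, l) \in L_neighbours a n) = (l <= j <= n %/ a).
Proof.
move=> l_dvd_a coprime_jl.
rewrite mem_filter mem_index_iota /L_adj lcmn_scale_ratio // leq_scale_ratio //.
have b_le_aj : scale_ratio a (j, l) <= a * j by rewrite leq_mul2r leq_div orbT.
rewrite leq_divRL // [j * a]mulnC ltnS.
have [aj_le_n | _] := leqP (a * j) n; last by rewrite andbF.
by rewrite (leq_trans b_le_aj aj_le_n) !andbT.
Qed.

Lemma perm_neighbours_reduced_pairs :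
  perm_eq (L_neighbours a n) (map (scale_ratio a) (reduced_pairs a n)).
Proof.
apply: uniq_perm; first by rewrite filter_uniq ?iota_uniq.
  rewrite map_inj_in_uniq ?uniq_reduced_pairs //.
  apply: (can_in_inj (g := reduced_ratio a)) => -[j l].
  by rewrite mem_reduced_pairs => /and3P[_ coprime_jl l_dvd_a]; apply: reduced_scale_ratio.
move=> b; apply/idP/mapP => [b_adj | [[j l] + ->]]; last first.
  rewrite mem_reduced_pairs => /and3P[jl_range coprime_jl l_dvd_a].
  by rewrite scale_ratio_in_neighbours.
case def_jl: (reduced_ratio a b) => [j l]; exists (j, l); last first.
  by rewrite -def_jl scale_reduced_ratio.
have [coprime_jl l_dvd_a] : coprime j l /\ l %| a.
  by case: def_jl => <- <-; rewrite coprime_reduced_ratio // dvdn_div ?dvdn_gcdl.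
rewrite mem_reduced_pairs coprime_jl l_dvd_a !andbT -scale_ratio_in_neighbours //.
by rewrite -def_jl scale_reduced_ratio.
Qed.

End Bijection.

Theorem proposition3p1 (a n : nat) :
  1 <= a -> a <= n ->
  L_degree a n a =
  \sum_(1 <= j < (n %/ a).+1)
     \sum_(1 <= l < j.+1 | coprime j l && (l %| a)) 1.
Proof.
move=> a_gt0 _.
rewrite L_degree_neighbours (perm_size (perm_neighbours_reduced_pairs a n a_gt0)).
by rewrite size_map size_reduced_pairs.
Qed.
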